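(* Let $p, \sigma \in \mathbb{R}$. The equation \[ -u''(x) = |x|^\sigma u(x)^p \quad \text{in } \mathbb{R} \] admits at least one non-trivial, non-negative classical solution if and only if one of the following holds: (1) $\sigma < -2$ and $p > -1-\sigma$; or (2) $-2 < \sigma < 0$ and $p < -1-\sigma$.
   Context: A classical solution is a function $u$ belonging to $C^2(\mathbb{R})$ if $\sigma \geq 0$, and to $C(\mathbb{R}) \cap C^2(\mathbb{R} \setminus \{0\})$ if $\sigma < 0$, such that the equation holds pointwise for all $x \in \mathbb{R}$ when $\sigma \geq 0$ and for all $x \neq 0$ when $\sigma < 0$. For $p=0$ the term $u^p$ is understood as $1$, and for $p<0$ it is required that $u>0$ at each point where the equation is imposed. *)

From Stdlib Require Import Reals.
From Coquelicot Require Import Coquelicot.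
Open Scope R_scope.

(* Real power x^y for x >= 0, with conventions 0^0 = 1 and 0^y = 0 for y <> 0.
   (For y < 0 the value at 0 is never used: the solution notion requires u > 0
   wherever the equation is imposed, and |x|^sigma at x = 0 is only used when
   sigma >= 0.) *)
Definition rpow (x y : R) : R :=
  if Req_EM_T x 0 then (if Req_EM_T y 0 then 1 else 0) else Rpower x y.

Definition C2_on (D : R -> Prop) (u u1 u2 : R -> R) : Prop :=
  forall x, D x ->
    is_derive u x (u1 x) /\ is_derive u1 x (u2 x) /\ continuous u2 x.

Definition eq_domain (sigma : R) (x : R) : Prop := 0 <= sigma \/ x <> 0.

Definition classical_solution (p sigma : R) (u : R -> R) : Prop :=
  (forall x, continuous u x) /\
  exists u1 u2 : R -> R,
    C2_on (eq_domain sigma) u u1 u2 /\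
    forall x, eq_domain sigma x ->
      (p < 0 -> 0 < u x) /\
      - u2 x = rpow (Rabs x) sigma * rpow (u x) p.

(* For sigma >= 0 a nonnegative solution is concave on the whole line, hence constant, hence
   zero. For sigma < 0, after the reflection x -> -x, u is positive somewhere on [0, +oo), and
   there u is concave, positive, nondecreasing, and satisfies x u'(x) <= u(x) by continuity at 0.
   If moreover sigma >= -2 and p >= -1 - sigma, comparing u with constants or linear functions
   (the latter by integrating the equation from x to +oo) shows that x^sigma u^p decays no faster
   than 1/x, so that u' eventually becomes negative; when p > 1 it is instead u' >= m/x that
   contradicts a bound on u. The Kelvin transform t u(1/t) exchanges 0 and +oo and maps the exponents with
   sigma <= -2 and p <= -1 - sigma to that range. The remaining exponents are exactly those for
   which (sigma + 2) / (1 - p) lies in (0, 1), and then c |x|^((sigma + 2) / (1 - p)) solves the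
   equation for a suitable c > 0. *)

From Stdlib Require Import Reals Lra.
From Coquelicot Require Import Coquelicot.
Open Scope R_scope.

Lemma Rpower_pos x a : 0 < Rpower x a.
Proof. apply exp_pos. Qed.

Lemma rpow_nonneg x a : 0 <= rpow x a.
Proof.
  unfold rpow; destruct Req_EM_T; [destruct Req_EM_T; lra | apply Rlt_le, Rpower_pos].
Qed.

Lemma rpow_Rpower x a : 0 < x -> rpow x a = Rpower x a.
Proof. intros Hx; unfold rpow; destruct Req_EM_T; [lra | reflexivity]. Qed.

Lemma Rpower_1_base a : Rpower 1 a = 1.
Proof. unfold Rpower; rewrite ln_1, Rmult_0_r; apply exp_0. Qed.

Lemma Rpower_le_base_nonpos a b c : c <= 0 -> 0 < a <= b -> Rpower b c <= Rpower a c.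
Proof.
  intros Hc [Ha Hab]; unfold Rpower.
  assert (ln a <= ln b) by (apply ln_le; lra).
  destruct (Req_dec (c * ln b) (c * ln a)) as [-> | Hne]; [lra |].
  left; apply exp_increasing; nra.
Qed.

Lemma Rle_Rpower_l_reg a b c : 0 < c -> 0 < a -> 0 < b -> Rpower a c <= Rpower b c -> a <= b.
Proof.
  intros Hc Ha Hb Hab; destruct (Rle_or_lt a b) as [| Hba]; [assumption |].
  pose proof (Rlt_Rpower_l b a c Hc (conj Hb Hba)); lra.
Qed.

Lemma Rpower_Rinv_base t a : 0 < t -> Rpower (/ t) a = Rpower t (- a).
Proof. intros Ht; unfold Rpower; rewrite ln_Rinv by exact Ht; f_equal; ring. Qed.

Lemma Rpower_inv_exponent e a : 0 < e -> a <> 0 -> Rpower (Rpower e (/ a)) a = e.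
Proof. intros He Ha; rewrite Rpower_mult, Rinv_l by exact Ha; apply Rpower_1, He. Qed.

Lemma Rpower_plus_1 t a : 0 < t -> Rpower t (a + 1) = Rpower t a * t.
Proof. intros Ht; rewrite Rpower_plus, Rpower_1 by exact Ht; reflexivity. Qed.

Lemma Rpower_opp_1 t : 0 < t -> Rpower t (- (1)) = / t.
Proof. intros Ht; rewrite Rpower_Ropp, Rpower_1 by exact Ht; reflexivity. Qed.

(* Also true at [y = 0], where both sides are [exp 0] since [ln 0 = 0]. *)
Lemma Rpower_abs_sqr y a : Rpower (y * y) (a / 2) = Rpower (Rabs y) a.
Proof.
  destruct (Req_dec y 0) as [Hy0 | Hy]; [subst y |].
  - assert (Hln0 : ln 0 = 0)
      by (unfold ln; destruct (Rlt_dec 0 0) as [H0 |]; [destruct (Rlt_irrefl 0 H0) | reflexivity]).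
    rewrite Rmult_0_l, Rabs_R0; unfold Rpower; rewrite Hln0, !Rmult_0_r; reflexivity.
  - assert (Ha : 0 < Rabs y) by (apply Rabs_pos_lt, Hy).
    replace (y * y) with (Rabs y * Rabs y) by (unfold Rabs; destruct Rcase_abs; ring).
    unfold Rpower; rewrite ln_mult by exact Ha.
    f_equal; field.
Qed.

Lemma Rpower_small_eventually a e x :
  a < 0 -> 0 < e -> exists y, x <= y /\ 0 < y /\ Rpower y a <= e.
Proof.
  intros Ha He; set (y0 := Rpower e (/ a)).
  assert (Hy0 : 0 < y0) by apply Rpower_pos.
  exists (Rmax x y0); split; [apply Rmax_l |].
  pose proof (Rmax_r x y0); split; [lra |].
  rewrite <- (Rpower_inv_exponent e a) by lra; fold y0.
  apply Rpower_le_base_nonpos; lra.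
Qed.

Lemma nonincreasing_of_derive_nonpos (h dh : R -> R) a b : a <= b ->
  (forall t, a <= t <= b -> is_derive h t (dh t)) ->
  (forall t, a <= t <= b -> dh t <= 0) -> h b <= h a.
Proof.
  intros Hab Hd Hs.
  destruct (MVT_gen h a b dh) as [c [Hc Heq]];
    rewrite ?Rmin_left, ?Rmax_right in * by lra.
  - intros t Ht; apply Hd; lra.
  - intros t Ht; apply derivable_continuous_pt; exists (dh t).
    apply is_derive_Reals, Hd; lra.
  - assert (dh c <= 0) by (apply Hs; lra); nra.
Qed.

Lemma nondecreasing_of_derive_nonneg (h dh : R -> R) a b : a <= b ->
  (forall t, a <= t <= b -> is_derive h t (dh t)) ->
  (forall t, a <= t <= b -> 0 <= dh t) -> h a <= h b.
Proof.
  intros Hab Hd Hs.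
  enough (- h b <= - h a) by lra.
  apply (nonincreasing_of_derive_nonpos (fun t => - h t) (fun t => - dh t)); auto.
  - intros t Ht; apply (is_derive_opp h), Hd, Ht.
  - intros t Ht; specialize (Hs t Ht); lra.
Qed.

Lemma unbounded_of_derive_ge_inv (g dg : R -> R) m : 0 < m ->
  (forall t, 1 <= t -> is_derive g t (dg t)) ->
  (forall t, 1 <= t -> m / t <= dg t) ->
  forall C, exists T, 1 <= T /\ C < g T.
Proof.
  intros Hm Hd Hb C.
  set (s := (Rabs (C - g 1) + 1) / m).
  assert (Hs : 0 <= s) by (apply Rmult_le_pos; [pose proof (Rabs_pos (C - g 1)); lra |
                                                 apply Rlt_le, Rinv_0_lt_compat, Hm]).
  exists (exp s).
  assert (HT : 1 <= exp s) by (pose proof (exp_ineq1_le s); lra).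
  split; [exact HT |].
  assert (Hlog : g 1 - m * ln 1 <= g (exp s) - m * ln (exp s)).
  { apply (nondecreasing_of_derive_nonneg (fun t => g t - m * ln t) (fun t => dg t - m * / t));
      [exact HT | |].
    - intros t Ht; apply (is_derive_minus g (fun t => m * ln t)); [apply Hd; lra |].
      apply (is_derive_scal ln), is_derive_ln; lra.
    - intros t Ht; specialize (Hb t (proj1 Ht)); unfold Rdiv in Hb; lra. }
  rewrite ln_exp, ln_1 in Hlog.
  assert (m * s = Rabs (C - g 1) + 1) by (unfold s; field; lra).
  pose proof (Rle_abs (C - g 1)); lra.
Qed.

Section Concave.

Variables (a : R) (u u1 u2 : R -> R).
Hypothesis derivs : forall x, a < x -> is_derive u x (u1 x) /\ is_derive u1 x (u2 x).
Hypothesis u2_nonpos : forall x, a < x -> u2 x <= 0.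

Lemma concave_derive_noninc x y : a < x <= y -> u1 y <= u1 x.
Proof.
  intros Hxy; apply (nonincreasing_of_derive_nonpos u1 u2); try lra;
    intros t Ht; [apply derivs | apply u2_nonpos]; lra.
Qed.

Lemma concave_tangent x y : a < x -> a < y -> u y <= u x + u1 x * (y - x).
Proof.
  intros Hx Hy.
  enough (u y - u1 x * y <= u x - u1 x * x) by lra.
  assert (Hd : forall t, a < t -> is_derive (fun t => u t - u1 x * t) t (u1 t - u1 x)).
  { intros t Ht; apply (is_derive_minus u (fun t => u1 x * t)); [apply derivs, Ht |].
    auto_derive; [exact I | ring]. }
  destruct (Rle_or_lt x y).
  - apply (nonincreasing_of_derive_nonpos (fun t => u t - u1 x * t) (fun t => u1 t - u1 x)); auto.
    + intros t Ht; apply Hd; lra.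
    + intros t Ht; pose proof (concave_derive_noninc x t); lra.
  - apply (nondecreasing_of_derive_nonneg (fun t => u t - u1 x * t) (fun t => u1 t - u1 x));
      try lra.
    + intros t Ht; apply Hd; lra.
    + intros t Ht; pose proof (concave_derive_noninc t x); lra.
Qed.

Lemma concave_nonneg_derive_nonneg :
  (forall x, a < x -> 0 <= u x) -> forall x, a < x -> 0 <= u1 x.
Proof.
  intros Hnn x Hx; destruct (Rle_or_lt 0 (u1 x)) as [| Hneg]; [assumption | exfalso].
  set (y := x + (u x + 1) / - u1 x).
  assert (Hyx : u1 x * (y - x) = - (u x + 1)) by (unfold y; field; lra).
  assert (0 <= (u x + 1) / - u1 x)
    by (apply Rmult_le_pos; [pose proof (Hnn x Hx) | apply Rlt_le, Rinv_0_lt_compat]; lra).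
  pose proof (concave_tangent x y Hx ltac:(unfold y; lra)).
  pose proof (Hnn y ltac:(unfold y; lra)); lra.
Qed.

Lemma concave_tangent_at_endpoint :
  continuous u a -> forall x, a < x -> u a <= u x + u1 x * (a - x).
Proof.
  intros Hc x Hx.
  assert (Hlim : forall f : R -> R, continuous f a -> filterlim f (at_right a) (Rbar_locally (f a)))
    by (intros f Hf; apply (filterlim_filter_le_1 (F := locally a));
        [apply filter_le_within | exact Hf]).
  change (Rbar_le (u a) (u x + u1 x * (a - x))).
  apply (filterlim_le (F := at_right a) u (fun y => u x + u1 x * (y - x))).
  - exists (mkposreal _ Rlt_0_1); intros y _ Hya; apply concave_tangent; assumption.
  - apply Hlim, Hc.
  - apply Hlim, (ex_derive_continuous (V := R_NormedModule)); auto_derive; exact I.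
Qed.

Lemma concave_nonneg_vanishes :
  continuous u a -> (forall x, a <= x -> 0 <= u x) ->
  forall b, a < b -> u b = 0 -> forall y, a <= y -> u y = 0.
Proof.
  intros Hc Hnn b Hb Hub y Hy.
  assert (Hu1b : 0 <= u1 b)
    by (apply concave_nonneg_derive_nonneg; [intros x Hx; apply Hnn; lra | exact Hb]).
  pose proof (concave_tangent_at_endpoint Hc b Hb); pose proof (Hnn a (Rle_refl a)).
  assert (u1 b = 0) by nra.
  destruct (Req_dec y a) as [-> | Hya]; [nra |].
  pose proof (concave_tangent b y Hb ltac:(lra)); pose proof (Hnn y Hy); nra.
Qed.

End Concave.

Definition half_line_solution (sigma p : R) (u u1 u2 : R -> R) : Prop :=
  forall x, 0 < x ->
    is_derive u x (u1 x) /\ is_derive u1 x (u2 x) /\ 0 < u x /\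
    u2 x = - (Rpower x sigma * Rpower (u x) p).

Section AtInfinity.

Variables (sigma p : R) (u u1 u2 : R -> R).
Hypothesis sol : half_line_solution sigma p u u1 u2.
Hypothesis u1_nonneg : forall x, 0 < x -> 0 <= u1 x.
Hypothesis tangent_at_0_nonneg : forall x, 0 < x -> x * u1 x <= u x.

Lemma sol_derivs x : 0 < x -> is_derive u x (u1 x) /\ is_derive u1 x (u2 x).
Proof. intros Hx; destruct (sol x Hx) as [? [? _]]; split; assumption. Qed.

Lemma sol_u_pos x : 0 < x -> 0 < u x.
Proof. intros Hx; apply (sol x Hx). Qed.

Lemma sol_u2_nonpos x : 0 < x -> u2 x <= 0.
Proof.
  intros Hx; destruct (sol x Hx) as [_ [_ [_ ->]]].
  pose proof (Rpower_pos x sigma); pose proof (Rpower_pos (u x) p); nra.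
Qed.

Lemma sol_u_nondec x y : 0 < x <= y -> u x <= u y.
Proof.
  intros Hxy; apply (nondecreasing_of_derive_nonneg u u1); try lra;
    intros t Ht; [apply sol_derivs | apply u1_nonneg]; lra.
Qed.

Lemma sol_u_le_linear t : 1 <= t -> u t <= (u 1 + u1 1) * t.
Proof.
  intros Ht.
  pose proof (concave_tangent 0 u u1 u2 sol_derivs sol_u2_nonpos 1 t Rlt_0_1 ltac:(lra)).
  pose proof (sol_u_pos 1 Rlt_0_1); pose proof (u1_nonneg 1 Rlt_0_1); nra.
Qed.

Lemma no_inverse_minorant m : 0 < m ->
  ~ (forall t, 1 <= t -> m / t <= Rpower t sigma * Rpower (u t) p).
Proof.
  intros Hm Hb.
  destruct (unbounded_of_derive_ge_inv (fun t => - u1 t) (fun t => - u2 t) m Hm) with (C := 0)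
    as [T [HT HuT]].
  - intros t Ht; apply (is_derive_opp u1), sol_derivs; lra.
  - intros t Ht; destruct (sol t) as [_ [_ [_ ->]]]; [lra |].
    rewrite Ropp_involutive; apply Hb, Ht.
  - pose proof (u1_nonneg T); lra.
Qed.

Lemma no_power_minorant M e : 0 < M -> 0 <= sigma + 1 + p * e ->
  ~ (forall t, 1 <= t -> Rpower (M * Rpower t e) p <= Rpower (u t) p).
Proof.
  intros HM He Hcmp; apply (no_inverse_minorant (Rpower M p)); [apply Rpower_pos |].
  intros t Ht.
  apply Rle_trans with (Rpower t sigma * Rpower (M * Rpower t e) p);
    [| apply Rmult_le_compat_l; [apply Rlt_le, Rpower_pos | apply Hcmp, Ht]].
  rewrite <- Rpower_mult_distr, Rpower_mult by (try apply Rpower_pos; lra).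
  replace (Rpower t sigma * (Rpower M p * Rpower t (e * p)))
    with (Rpower M p * Rpower t (sigma + e * p)) by (rewrite Rpower_plus; ring).
  unfold Rdiv; rewrite <- Rpower_opp_1 by lra.
  apply Rmult_le_compat_l; [apply Rlt_le, Rpower_pos | apply Rle_Rpower; lra].
Qed.

Lemma no_solution_sigma_ge_m1 : -1 <= sigma -> -1 - sigma <= p -> False.
Proof.
  intros Hs Hp; pose proof (sol_u_pos 1 Rlt_0_1); pose proof (u1_nonneg 1 Rlt_0_1).
  destruct (Rlt_or_le p 0) as [Hneg | Hnn].
  - apply (no_power_minorant (u 1 + u1 1) 1); [lra | lra |].
    intros t Ht; rewrite Rpower_1 by lra.
    apply Rpower_le_base_nonpos; [lra |].
    split; [apply sol_u_pos; lra | apply sol_u_le_linear, Ht].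
  - apply (no_power_minorant (u 1) 0); [lra | lra |].
    intros t Ht; rewrite Rpower_O, Rmult_1_r by lra.
    apply Rle_Rpower_l; [lra |]; split; [lra | apply sol_u_nondec; lra].
Qed.

(* Since [u1 >= 0], [u1 x] dominates the integral of [-u2 = t^sigma u^p] over [[x, +oo)],
   on which [u >= u x]. *)
Lemma u1_ge_tail : sigma < -1 -> 0 <= p -> forall x, 0 < x ->
  Rpower (u x) p * Rpower x (sigma + 1) / (- sigma - 1) <= u1 x.
Proof.
  intros Hs Hp x Hx.
  set (A := Rpower (u x) p / (- sigma - 1)).
  assert (HA : 0 < A) by (apply Rdiv_lt_0_compat; [apply Rpower_pos | lra]).
  assert (Htail : forall y, x <= y ->
            A * (Rpower x (sigma + 1) - Rpower y (sigma + 1)) <= u1 x).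
  { intros y Hxy.
    assert (u1 y - A * Rpower y (sigma + 1) <= u1 x - A * Rpower x (sigma + 1)).
    { apply (nonincreasing_of_derive_nonpos (fun t => u1 t - A * Rpower t (sigma + 1))
               (fun t => u2 t - A * ((sigma + 1) * Rpower t (sigma + 1 - 1)))); [exact Hxy | |].
      - intros t Ht; apply (is_derive_minus u1 (fun t => A * Rpower t (sigma + 1)));
          [apply sol_derivs; lra |].
        apply (is_derive_scal (fun t => Rpower t (sigma + 1))), is_derive_Reals,
          derivable_pt_lim_power; lra.
      - intros t Ht; destruct (sol t) as [_ [_ [_ ->]]]; [lra |].
        replace (sigma + 1 - 1) with sigma by ring.
        assert (Rpower (u x) p <= Rpower (u t) p)
          by (apply Rle_Rpower_l; [lra | split; [apply sol_u_pos, Hx | apply sol_u_nondec; lra]]).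
        pose proof (Rpower_pos t sigma).
        replace (A * ((sigma + 1) * Rpower t sigma)) with (- (Rpower (u x) p * Rpower t sigma))
          by (unfold A; field; lra).
        nra. }
    pose proof (u1_nonneg y ltac:(lra)); lra. }
  replace (Rpower (u x) p * Rpower x (sigma + 1) / (- sigma - 1))
    with (A * Rpower x (sigma + 1)) by (unfold A; field; lra).
  apply Rle_plus_epsilon; intros eps Heps.
  destruct (Rpower_small_eventually (sigma + 1) (eps / A) x) as [y [Hxy [_ Hy]]];
    [lra | apply Rdiv_lt_0_compat; lra |].
  specialize (Htail y Hxy).
  assert (A * Rpower y (sigma + 1) <= A * (eps / A)) by (apply Rmult_le_compat_l; lra).
  replace (A * (eps / A)) with eps in * by (field; lra).
  lra.
Qed.

Lemma u_ge_tail : sigma < -1 -> 0 <= p -> forall x, 0 < x ->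
  Rpower (u x) p * Rpower x (sigma + 2) / (- sigma - 1) <= u x.
Proof.
  intros Hs Hp x Hx.
  replace (sigma + 2) with (sigma + 1 + 1) by ring; rewrite Rpower_plus_1 by exact Hx.
  pose proof (u1_ge_tail Hs Hp x Hx); pose proof (tangent_at_0_nonneg x Hx).
  replace (Rpower (u x) p * (Rpower x (sigma + 1) * x) / (- sigma - 1))
    with (Rpower (u x) p * Rpower x (sigma + 1) / (- sigma - 1) * x) by (field; lra).
  nra.
Qed.

(* [u_ge_tail] gives [u^(1-p) >= k t^(sigma+2) >= k t^(1-p)]: linear growth. *)
Lemma no_solution_p_lt_1 : -2 <= sigma < -1 -> -1 - sigma <= p < 1 -> False.
Proof.
  intros Hs Hp; set (k := / (- sigma - 1)).
  assert (Hk : 0 < k) by (apply Rinv_0_lt_compat; lra).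
  apply (no_power_minorant (Rpower k (/ (1 - p))) 1); [apply Rpower_pos | lra |].
  intros t Ht; rewrite Rpower_1 by lra.
  assert (Hut : 0 < u t) by (apply sol_u_pos; lra).
  assert (Hkt : 0 < Rpower k (/ (1 - p)) * t) by (pose proof (Rpower_pos k (/ (1 - p))); nra).
  apply Rle_Rpower_l; [lra | split; [exact Hkt |]].
  apply (Rle_Rpower_l_reg _ _ (1 - p)); [lra | exact Hkt | exact Hut |].
  rewrite <- Rpower_mult_distr, Rpower_inv_exponent by (try apply Rpower_pos; lra).
  pose proof (u_ge_tail ltac:(lra) ltac:(lra) t ltac:(lra)) as Hq.
  replace (Rpower (u t) p * Rpower t (sigma + 2) / (- sigma - 1))
    with (k * Rpower t (sigma + 2) * Rpower (u t) p) in Hq by (unfold k; field; lra).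
  assert (Rpower t (1 - p) <= Rpower t (sigma + 2)) by (apply Rle_Rpower; lra).
  assert (Hsplit : u t = Rpower (u t) (1 - p) * Rpower (u t) p)
    by (rewrite <- Rpower_plus; replace (1 - p + p) with 1 by ring; rewrite Rpower_1; lra).
  pose proof (Rpower_pos (u t) p).
  apply Rmult_le_reg_r with (Rpower (u t) p); [assumption |].
  rewrite <- Hsplit.
  assert (k * Rpower (u t) p * Rpower t (1 - p) <= k * Rpower (u t) p * Rpower t (sigma + 2))
    by (apply Rmult_le_compat_l; nra).
  lra.
Qed.

Lemma no_solution_p_eq_1 : -2 <= sigma < -1 -> p = 1 -> False.
Proof.
  intros Hs Hp; pose proof (sol_u_pos 1 Rlt_0_1) as Hu1.
  destruct (Req_dec sigma (-2)) as [Hs2 | Hs2].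
  - (* Here [u1_ge_tail] reads [u t / t <= u1 t], and with the tangent at [t] it yields
       the linear growth [u 1 * t <= u t]. *)
    apply (no_power_minorant (u 1) 1); [exact Hu1 | lra |].
    intros t Ht; assert (Hut : 0 < u t) by (apply sol_u_pos; lra).
    rewrite Hp, (Rpower_1 t), (Rpower_1 (u t)), Rpower_1 by nra.
    pose proof (u1_ge_tail ltac:(lra) ltac:(lra) t ltac:(lra)) as Hk.
    rewrite Hp, Hs2 in Hk; replace (-2 + 1) with (- (1)) in Hk by ring.
    rewrite Rpower_1, Rpower_opp_1 in Hk by lra.
    replace (u t * / t / (- -2 - 1)) with (u t / t) in Hk by (field; lra).
    pose proof (concave_tangent 0 u u1 u2 sol_derivs sol_u2_nonpos t 1 ltac:(lra) Rlt_0_1).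
    assert ((1 - t) * u1 t <= (1 - t) * (u t / t)) by (apply Rmult_le_compat_neg_l; lra).
    assert (u t + (1 - t) * (u t / t) = u t / t) by (field; lra).
    apply Rmult_le_reg_r with (/ t); [apply Rinv_0_lt_compat; lra |].
    replace (u 1 * t * / t) with (u 1) by (field; lra); unfold Rdiv in *; lra.
  - (* At [x = 1], [u_ge_tail] reads [u 1 / (- sigma - 1) <= u 1] with [- sigma - 1 < 1]. *)
    pose proof (u_ge_tail ltac:(lra) ltac:(lra) 1 Rlt_0_1) as Hq.
    rewrite Hp, Rpower_1_base, Rpower_1 in Hq by exact Hu1.
    assert (u 1 * 1 / (- sigma - 1) * (- sigma - 1) = u 1) by (field; lra).
    nra.
Qed.

(* [u_ge_tail] bounds [u], whereas [u1_ge_tail] gives [u1 t >= m / t]. *)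
Lemma no_solution_p_gt_1 : -2 <= sigma < -1 -> 1 < p -> False.
Proof.
  intros Hs Hp; pose proof (sol_u_pos 1 Rlt_0_1) as Hu1.
  set (m := Rpower (u 1) p / (- sigma - 1)).
  assert (Hm : 0 < m) by (apply Rdiv_lt_0_compat; [apply Rpower_pos | lra]).
  destruct (unbounded_of_derive_ge_inv u u1 m Hm) with (C := Rpower (- sigma - 1) (/ (p - 1)))
    as [T [HT HuT]].
  - intros t Ht; apply sol_derivs; lra.
  - intros t Ht.
    apply Rle_trans with (Rpower (u t) p * Rpower t (sigma + 1) / (- sigma - 1));
      [| apply u1_ge_tail; lra].
    assert (Rpower (u 1) p <= Rpower (u t) p)
      by (apply Rle_Rpower_l; [lra | split; [exact Hu1 | apply sol_u_nondec; lra]]).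
    assert (/ t <= Rpower t (sigma + 1))
      by (rewrite <- Rpower_opp_1 by lra; apply Rle_Rpower; lra).
    pose proof (Rpower_pos (u 1) p); pose proof (Rinv_0_lt_compat t ltac:(lra)).
    assert (Rpower (u 1) p * / t <= Rpower (u t) p * Rpower t (sigma + 1))
      by (apply Rmult_le_compat; lra).
    unfold m, Rdiv; replace (Rpower (u 1) p * / (- sigma - 1) * / t)
      with (Rpower (u 1) p * / t * / (- sigma - 1)) by ring.
    apply Rmult_le_compat_r; [apply Rlt_le, Rinv_0_lt_compat; lra | assumption].
  - assert (HuT0 : 0 < u T) by (apply sol_u_pos; lra).
    enough (u T <= Rpower (- sigma - 1) (/ (p - 1))) by lra.
    apply (Rle_Rpower_l_reg _ _ (p - 1)); [lra | exact HuT0 | apply Rpower_pos |].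
    rewrite Rpower_inv_exponent by lra.
    pose proof (u_ge_tail ltac:(lra) ltac:(lra) T ltac:(lra)) as Hq.
    assert (1 <= Rpower T (sigma + 2)) by (rewrite <- (Rpower_O T) by lra; apply Rle_Rpower; lra).
    replace p with (p - 1 + 1) in Hq at 1 by ring; rewrite Rpower_plus_1 in Hq by exact HuT0.
    pose proof (Rpower_pos (u T) (p - 1)).
    apply Rmult_le_reg_r with (u T / (- sigma - 1)); [apply Rdiv_lt_0_compat; lra |].
    replace ((- sigma - 1) * (u T / (- sigma - 1))) with (u T) by (field; lra).
    unfold Rdiv in *; nra.
Qed.

Lemma no_solution_at_infinity : -2 <= sigma -> -1 - sigma <= p -> False.
Proof.
  intros Hs Hp; destruct (Rle_or_lt (-1) sigma); [now apply no_solution_sigma_ge_m1 |].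
  destruct (Rtotal_order p 1) as [H1 | [H1 | H1]].
  - apply no_solution_p_lt_1; lra.
  - apply no_solution_p_eq_1; lra.
  - apply no_solution_p_gt_1; lra.
Qed.

End AtInfinity.

Lemma is_derive_comp_Rinv (f : R -> R) l t : t <> 0 -> is_derive f (/ t) l ->
  is_derive (fun s => f (/ s)) t (- l / (t * t)).
Proof.
  intros Ht Hf.
  assert (Hinv : is_derive (fun s : R => / s) t (- / (t * t)))
    by (auto_derive; [exact Ht | field; exact Ht]).
  replace (- l / (t * t)) with (scal (- / (t * t)) l)
    by (unfold scal; simpl; unfold mult; simpl; field; exact Ht).
  exact (is_derive_comp f (fun s => / s) t l _ Hf Hinv).
Qed.

Lemma kelvin_half_line_solution sigma p u u1 u2 :
  half_line_solution sigma p u u1 u2 ->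
  half_line_solution (-3 - sigma - p) p (fun t => t * u (/ t))
    (fun t => u (/ t) - u1 (/ t) / t) (fun t => u2 (/ t) / (t * t * t)).
Proof.
  intros sol t Ht.
  assert (Hit : 0 < / t) by (apply Rinv_0_lt_compat, Ht).
  destruct (sol (/ t) Hit) as [Du [Du1 [Hu Heq]]].
  split; [| split; [| split]].
  - replace (u (/ t) - u1 (/ t) / t) with (1 * u (/ t) + t * (- u1 (/ t) / (t * t)))
      by (field; lra).
    apply (is_derive_mult (fun s => s) (fun s => u (/ s))); [auto_derive; [exact I | ring] | |].
    + apply is_derive_comp_Rinv; [lra | exact Du].
    + intros; apply Rmult_comm.
  - replace (u2 (/ t) / (t * t * t))
      with (- u1 (/ t) / (t * t) - (- u2 (/ t) / (t * t) * / t + u1 (/ t) * (- / (t * t))))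
      by (field; lra).
    apply (is_derive_minus (fun s => u (/ s)) (fun s => u1 (/ s) / s));
      [apply is_derive_comp_Rinv; [lra | exact Du] |].
    apply (is_derive_mult (fun s => u1 (/ s)) (fun s => / s));
      [apply is_derive_comp_Rinv; [lra | exact Du1] | auto_derive; [lra | field; lra] |].
    intros; apply Rmult_comm.
  - apply Rmult_lt_0_compat; assumption.
  - rewrite Heq, <- Rpower_mult_distr, Rpower_Rinv_base by assumption.
    replace (-3 - sigma - p) with (- sigma + - p + - INR 3) by (simpl; ring).
    rewrite !Rpower_plus, !Rpower_Ropp, Rpower_pow by exact Ht.
    pose proof (Rpower_pos t p); pose proof (Rpower_pos t sigma); simpl; field; repeat split; lra.
Qed.

(* The Kelvin transform [t u(1/t)] maps [sigma] to [-3 - sigma - p] and swaps the two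
   side conditions [0 <= u1] and [x u1 <= u]. *)
Lemma no_solution_at_zero sigma p u u1 u2 :
  half_line_solution sigma p u u1 u2 ->
  (forall x, 0 < x -> 0 <= u1 x) -> (forall x, 0 < x -> x * u1 x <= u x) ->
  sigma <= -2 -> p <= -1 - sigma -> False.
Proof.
  intros sol Hu1 Htan0 Hs Hp.
  apply (no_solution_at_infinity (-3 - sigma - p) p _ _ _
           (kelvin_half_line_solution sigma p u u1 u2 sol));
    [intros t Ht | intros t Ht | lra | lra];
    assert (Hit : 0 < / t) by (apply Rinv_0_lt_compat, Ht).
  - pose proof (Htan0 (/ t) Hit); unfold Rdiv; lra.
  - pose proof (Hu1 (/ t) Hit).
    replace (t * (u (/ t) - u1 (/ t) / t)) with (t * u (/ t) - u1 (/ t)) by (field; lra); lra.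
Qed.

Lemma half_line_exponents sigma p u u1 u2 : sigma < 0 ->
  half_line_solution sigma p u u1 u2 ->
  (forall x, 0 < x -> 0 <= u1 x) -> (forall x, 0 < x -> x * u1 x <= u x) ->
  (sigma < -2 /\ p > -1 - sigma) \/ (-2 < sigma < 0 /\ p < -1 - sigma).
Proof.
  intros Hs sol Hu1 Htan0.
  pose proof (no_solution_at_infinity sigma p u u1 u2 sol Hu1 Htan0) as Hinf.
  pose proof (no_solution_at_zero sigma p u u1 u2 sol Hu1 Htan0) as Hzero.
  destruct (Rtotal_order sigma (-2)) as [? | [? | ?]];
    destruct (Rtotal_order p (-1 - sigma)) as [? | [? | ?]];
    solve [left; lra | right; lra | exfalso; apply Hinf; lra | exfalso; apply Hzero; lra].
Qed.

Lemma classical_solution_half_line p sigma u : sigma < 0 ->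
  classical_solution p sigma u -> (forall x, 0 <= u x) ->
  forall x0, 0 <= x0 -> u x0 <> 0 ->
  exists u1 u2, half_line_solution sigma p u u1 u2 /\
    (forall x, 0 < x -> 0 <= u1 x) /\ (forall x, 0 < x -> x * u1 x <= u x).
Proof.
  intros Hs [Hc [u1 [u2 [HC2 Heq]]]] Hnn x0 Hx0 Hux0.
  assert (Hdom : forall x, 0 < x -> eq_domain sigma x) by (intros x Hx; right; lra).
  assert (derivs : forall x, 0 < x -> is_derive u x (u1 x) /\ is_derive u1 x (u2 x))
    by (intros x Hx; destruct (HC2 x (Hdom x Hx)) as [? [? _]]; split; assumption).
  assert (Hu2 : forall x, 0 < x -> u2 x <= 0).
  { intros x Hx; destruct (Heq x (Hdom x Hx)) as [_ E].
    pose proof (rpow_nonneg (Rabs x) sigma); pose proof (rpow_nonneg (u x) p); nra. }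
  assert (Hpos : forall x, 0 < x -> 0 < u x).
  { intros x Hx; destruct (Hnn x) as [| Hz]; [assumption | exfalso].
    apply Hux0, (concave_nonneg_vanishes 0 u u1 u2 derivs Hu2 (Hc 0) (fun y _ => Hnn y) x Hx);
      [symmetry |]; assumption. }
  exists u1, u2; split; [| split].
  - intros x Hx; destruct (Heq x (Hdom x Hx)) as [_ E].
    rewrite Rabs_pos_eq, !rpow_Rpower in E by (try apply Hpos; lra).
    repeat split; try apply derivs; try apply Hpos; lra.
  - apply (concave_nonneg_derive_nonneg 0 u u1 u2 derivs Hu2); intros; apply Hnn.
  - intros x Hx; pose proof (concave_tangent_at_endpoint 0 u u1 u2 derivs Hu2 (Hc 0) x Hx).
    pose proof (Hnn 0); lra.
Qed.

Lemma nonneg_solution_trivial p sigma u : 0 <= sigma ->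
  classical_solution p sigma u -> (forall x, 0 <= u x) -> forall x, u x = 0.
Proof.
  intros Hs [_ [u1 [u2 [HC2 Heq]]]] Hnn.
  assert (derivs : forall a x, a < x -> is_derive u x (u1 x) /\ is_derive u1 x (u2 x))
    by (intros a x _; destruct (HC2 x (or_introl Hs)) as [? [? _]]; split; assumption).
  assert (Hu2 : forall a x, a < x -> u2 x <= 0).
  { intros a x _; destruct (Heq x (or_introl Hs)) as [_ E].
    pose proof (rpow_nonneg (Rabs x) sigma); pose proof (rpow_nonneg (u x) p); nra. }
  assert (Hu1 : forall x, u1 x = 0).
  { intros x; apply Rle_antisym.
    - destruct (Rle_or_lt (u1 x) 0) as [| Hu1x]; [assumption | exfalso].
      set (y := x - (u x + 1) / u1 x).
      assert (Hyx : u1 x * (y - x) = - (u x + 1)) by (unfold y; field; lra).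
      assert (y < x) by (pose proof (Hnn x); nra).
      pose proof (concave_tangent (y - 1) u u1 u2 (derivs _) (Hu2 _) x y ltac:(lra) ltac:(lra)).
      pose proof (Hnn y); lra.
    - apply (concave_nonneg_derive_nonneg (x - 1) u u1 u2 (derivs _) (Hu2 _));
        [intros; apply Hnn | lra]. }
  assert (Hconst : forall x, u x = u 1).
  { intros x; set (a := Rmin x 1 - 1).
    assert (a < x /\ a < 1) by (pose proof (Rmin_l x 1); pose proof (Rmin_r x 1); unfold a; lra).
    pose proof (concave_tangent a u u1 u2 (derivs _) (Hu2 _) x 1 ltac:(lra) ltac:(lra)).
    pose proof (concave_tangent a u u1 u2 (derivs _) (Hu2 _) 1 x ltac:(lra) ltac:(lra)).
    rewrite !Hu1 in *; lra. }
  assert (Hu2_1 : u2 1 = 0).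
  { assert (Hd0 : is_derive u1 1 0)
      by (apply (is_derive_ext (fun _ => 0)); [intros; symmetry; apply Hu1 | auto_derive; auto]).
    rewrite <- (is_derive_unique _ _ _ Hd0); symmetry; apply is_derive_unique, (derivs 0); lra. }
  destruct (Heq 1 (or_introl Hs)) as [_ E].
  rewrite Hu2_1, Rabs_R1, (rpow_Rpower 1), Rpower_1_base in E by lra.
  intros x; rewrite Hconst; destruct (Hnn 1) as [Hpos | Hz]; [exfalso | auto].
  rewrite rpow_Rpower in E by exact Hpos; pose proof (Rpower_pos (u 1) p); lra.
Qed.

Lemma classical_solution_reflect p sigma u :
  classical_solution p sigma u -> classical_solution p sigma (fun x => u (- x)).
Proof.
  intros [Hc [u1 [u2 [HC2 Heq]]]].
  assert (Hdom : forall x, eq_domain sigma x -> eq_domain sigma (- x))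
    by (intros x [H | H]; [left | right]; lra).
  assert (Dopp : forall x, is_derive (fun y : R => - y) x (-1))
    by (intros; auto_derive; [exact I | ring]).
  assert (Copp : forall (f : R -> R) x, continuous f (- x) -> continuous (fun y => f (- y)) x).
  { intros f x Hf; apply (continuous_comp (fun y => - y) f); [| exact Hf].
    apply (ex_derive_continuous (V := R_NormedModule)); eexists; apply Dopp. }
  split; [intros x; apply Copp, Hc |].
  exists (fun x => - u1 (- x)), (fun x => u2 (- x)); split.
  - intros x Hx; destruct (HC2 (- x) (Hdom x Hx)) as [D1 [D2 C2]]; split; [| split].
    + replace (- u1 (- x)) with (scal (-1) (u1 (- x)))
        by (unfold scal; simpl; unfold mult; simpl; ring).
      apply (is_derive_comp u (fun y => - y)); [exact D1 | apply Dopp].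
    + replace (u2 (- x)) with (- scal (-1) (u2 (- x)))
        by (unfold scal; simpl; unfold mult; simpl; ring).
      apply (is_derive_opp (fun y => u1 (- y))), (is_derive_comp u1 (fun y => - y));
        [exact D2 | apply Dopp].
    + apply Copp, C2.
  - intros x Hx; destruct (Heq (- x) (Hdom x Hx)) as [Hp E]; rewrite Rabs_Ropp in E.
    split; [exact Hp | exact E].
Qed.

(* Proved through [Rpower (y * y) (b / 2)], which avoids the sign of [y]. *)
Lemma is_derive_abs_Rpower b x : x <> 0 ->
  is_derive (fun y => Rpower (Rabs y) b) x (b * (x * Rpower (Rabs x) (b - 2))).
Proof.
  intros Hx; assert (Hxx : 0 < x * x) by (apply Rsqr_pos_lt, Hx).
  apply (is_derive_ext (fun y => Rpower (y * y) (b / 2))); [intros; apply Rpower_abs_sqr |].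
  replace (b * (x * Rpower (Rabs x) (b - 2)))
    with (scal (2 * x) (b / 2 * Rpower (x * x) (b / 2 - 1))).
  - apply (is_derive_comp (fun t => Rpower t (b / 2)) (fun y => y * y));
      [apply is_derive_Reals, derivable_pt_lim_power, Hxx | auto_derive; [exact I | ring]].
  - rewrite <- Rpower_abs_sqr; replace ((b - 2) / 2) with (b / 2 - 1) by field.
    unfold scal; simpl; unfold mult; simpl; field.
Qed.

Lemma is_derive_mul_abs_Rpower b x : x <> 0 ->
  is_derive (fun y => y * Rpower (Rabs y) b) x ((b + 1) * Rpower (Rabs x) b).
Proof.
  intros Hx; assert (Hax : 0 < Rabs x) by (apply Rabs_pos_lt, Hx).
  assert (E : Rpower (Rabs x) b = x * x * Rpower (Rabs x) (b - 2)).
  { replace b with (b - 2 + 1 + 1) at 1 by ring; rewrite !Rpower_plus_1 by exact Hax.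
    replace (x * x) with (Rabs x * Rabs x) by (unfold Rabs; destruct Rcase_abs; ring); ring. }
  replace ((b + 1) * Rpower (Rabs x) b)
    with (1 * Rpower (Rabs x) b + x * (b * (x * Rpower (Rabs x) (b - 2)))) by (rewrite E; ring).
  apply (is_derive_mult (fun y => y) (fun y => Rpower (Rabs y) b));
    [auto_derive; [exact I | ring] | apply is_derive_abs_Rpower, Hx | intros; apply Rmult_comm].
Qed.

Lemma continuous_rpow_abs_0 a : 0 < a -> continuous (fun y => rpow (Rabs y) a) 0.
Proof.
  intros Ha; apply filterlim_locally; intros eps.
  exists (mkposreal _ (Rpower_pos eps (/ a))); intros y Hy.
  change (Rabs (y + - 0) < Rpower eps (/ a)) in Hy.
  change (Rabs (rpow (Rabs y) a + - rpow (Rabs 0) a) < eps).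
  assert (H0 : forall z, rpow (Rabs z) a = 0 \/ z <> 0 /\ rpow (Rabs z) a = Rpower (Rabs z) a).
  { intros z; destruct (Req_dec z 0) as [-> | Hz]; [left | right; split; [exact Hz |]].
    - rewrite Rabs_R0; unfold rpow.
      destruct Req_EM_T; [| lra]; destruct Req_EM_T; [lra | reflexivity].
    - apply rpow_Rpower, Rabs_pos_lt, Hz. }
  destruct (H0 0) as [-> | [? _]]; [| lra].
  rewrite Ropp_0, Rplus_0_r in *; rewrite Rabs_pos_eq by apply rpow_nonneg.
  destruct (H0 y) as [-> | [Hy0 ->]]; [apply cond_pos |].
  rewrite <- (Rpower_inv_exponent eps a) by (pose proof (cond_pos eps); lra).
  apply Rlt_Rpower_l; [exact Ha | split; [apply Rabs_pos_lt, Hy0 | exact Hy]].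
Qed.

Lemma abs_power_classical_solution p sigma al c : sigma < 0 -> 0 < al < 1 -> 0 < c ->
  al * (1 - p) = sigma + 2 -> Rpower c p = al * (1 - al) * c ->
  classical_solution p sigma (fun x => c * rpow (Rabs x) al).
Proof.
  intros Hs Hal Hc Hrel Hcp.
  set (u := fun x => c * rpow (Rabs x) al).
  set (u1 := fun x => c * (al * (x * Rpower (Rabs x) (al - 2)))).
  set (u2 := fun x => c * (al * ((al - 2 + 1) * Rpower (Rabs x) (al - 2)))).
  assert (Du : forall x, x <> 0 -> is_derive u x (u1 x)).
  { intros x Hx; apply (is_derive_ext_loc (fun y => c * Rpower (Rabs y) al)).
    - exists (mkposreal _ (Rabs_pos_lt x Hx)); intros y Hy.
      unfold u; rewrite rpow_Rpower; [reflexivity |].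
      apply Rabs_pos_lt; intros ->.
      change (Rabs (0 + - x) < Rabs x) in Hy; rewrite Rplus_0_l, Rabs_Ropp in Hy; lra.
    - apply is_derive_scal, is_derive_abs_Rpower, Hx. }
  assert (Du1 : forall x, x <> 0 -> is_derive u1 x (u2 x))
    by (intros x Hx; apply is_derive_scal, is_derive_scal, is_derive_mul_abs_Rpower, Hx).
  split; [| exists u1, u2; split].
  - intros x; destruct (Req_dec x 0) as [-> | Hx].
    + apply (continuous_mult (fun _ => c));
        [apply continuous_const | apply continuous_rpow_abs_0, Hal].
    + apply (ex_derive_continuous (V := R_NormedModule)); eexists; apply Du, Hx.
  - intros x [Hs' | Hx]; [lra |]; split; [apply Du, Hx | split; [apply Du1, Hx |]].
    apply (ex_derive_continuous (V := R_NormedModule)); eexists.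
    apply is_derive_scal, is_derive_scal, is_derive_scal, is_derive_abs_Rpower, Hx.
  - intros x [Hs' | Hx]; [lra |].
    assert (Hax : 0 < Rabs x) by (apply Rabs_pos_lt, Hx).
    pose proof (Rpower_pos (Rabs x) al).
    unfold u2, u; rewrite !rpow_Rpower by (try apply Rmult_lt_0_compat; assumption).
    split; [intros _; apply Rmult_lt_0_compat; assumption |].
    rewrite <- Rpower_mult_distr, Rpower_mult, Hcp by (try apply Rpower_pos; assumption).
    replace (al - 2) with (sigma + al * p) at 2 by lra; rewrite Rpower_plus; ring.
Qed.

Lemma exponents_admit_solution p sigma :
  (sigma < -2 /\ p > -1 - sigma) \/ (-2 < sigma < 0 /\ p < -1 - sigma) ->
  exists u, classical_solution p sigma u /\ (forall x, 0 <= u x) /\ (exists x, u x <> 0).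
Proof.
  intros Hcase; assert (Hp1 : p <> 1) by (destruct Hcase; lra).
  set (al := (sigma + 2) / (1 - p)).
  assert (Hrel : al * (1 - p) = sigma + 2) by (unfold al; field; lra).
  assert (Hal : 0 < al < 1) by (destruct Hcase; split; nra).
  set (c := Rpower (al * (1 - al)) (/ (p - 1))).
  assert (Hc : 0 < c) by apply Rpower_pos.
  exists (fun x => c * rpow (Rabs x) al); split; [| split].
  - apply abs_power_classical_solution; [destruct Hcase; lra | exact Hal | exact Hc | exact Hrel |].
    replace p with (p - 1 + 1) at 1 by ring.
    rewrite Rpower_plus_1 by exact Hc; unfold c at 1.
    rewrite Rpower_inv_exponent by (try nra; lra); reflexivity.
  - intros x; pose proof (rpow_nonneg (Rabs x) al); nra.
  - exists 1; rewrite Rabs_R1, rpow_Rpower, Rpower_1_base by lra; lra.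
Qed.

Theorem theorem1p2 (p sigma : R) :
  (exists u : R -> R,
      classical_solution p sigma u /\
      (forall x, 0 <= u x) /\
      (exists x, u x <> 0))
  <->
  ((sigma < -2 /\ p > -1 - sigma) \/ (-2 < sigma < 0 /\ p < -1 - sigma)).
Proof.
  split; [| apply exponents_admit_solution].
  intros [u [Hsol [Hnn [x0 Hx0]]]].
  destruct (Rle_or_lt 0 sigma) as [Hs | Hs].
  { exfalso; apply Hx0, (nonneg_solution_trivial p sigma u Hs Hsol Hnn). }
  assert (Hhalf : exists v, classical_solution p sigma v /\ (forall x, 0 <= v x) /\
                            exists x, 0 <= x /\ v x <> 0).
  { destruct (Rle_or_lt 0 x0).
    - exists u; eauto.
    - exists (fun x => u (- x)); split; [apply classical_solution_reflect, Hsol |].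
      split; [intros; apply Hnn |].
      exists (- x0); rewrite Ropp_involutive; split; [lra | exact Hx0]. }
  destruct Hhalf as [v [Hv [Hvnn [x1 [Hx1 Hvx1]]]]].
  destruct (classical_solution_half_line p sigma v Hs Hv Hvnn x1 Hx1 Hvx1)
    as [v1 [v2 [sol [Hv1 Htan0]]]].
  exact (half_line_exponents sigma p v v1 v2 Hs sol Hv1 Htan0).
Qed.
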